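(* Let $R$ be an associative ring. Then $R$ is both left locally unital and right locally unital if and only if for every $n\in\mathbb{N}$ and all $r_1,\ldots,r_n \in R$ there is an idempotent $e \in R$ with $e r_i = r_i e = r_i$ for all $i \in\{1,\ldots,n\}$.
   Context: Rings are associative, not necessarily unital. $R$ is called left (right) locally unital if for every $n \in \mathbb{N}$ and all $r_1,\ldots,r_n\in R$ there is an idempotent $e\in R$ (i.e. $e^2=e$) such that $e r_i = r_i$ (respectively $r_i e = r_i$) for all $i\in\{1,\ldots,n\}$. *)

(* Rings are NOT assumed unital, so we cannot use MathComp's
   ring structures (which have a 1). *)
From HB Require Import structures.
From mathcomp Require Import all_boot all_order all_algebra.
Set Implicit Arguments. Unset Strict Implicit. Unset Printing Implicit Defensive.
Import GRing.Theory.
Local Open Scope ring_scope.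

Definition assoc_ring_axioms (R : zmodType) (mul : R -> R -> R) : Prop :=
  [/\ (forall x y z, mul x (mul y z) = mul (mul x y) z),
      (forall x y z, mul (x + y) z = mul x z + mul y z) &
      (forall x y z, mul x (y + z) = mul x y + mul x z)].

Definition idempotent_el (R : Type) (mul : R -> R -> R) (e : R) : Prop :=
  mul e e = e.

Definition left_locally_unital (R : Type) (mul : R -> R -> R) : Prop :=
  forall (n : nat) (r : 'I_n -> R),
    exists e : R, idempotent_el mul e /\ (forall i, mul e (r i) = r i).

Definition right_locally_unital (R : Type) (mul : R -> R -> R) : Prop :=
  forall (n : nat) (r : 'I_n -> R),
    exists e : R, idempotent_el mul e /\ (forall i, mul (r i) e = r i).

From HB Require Import structures.
From mathcomp Require Import all_boot all_order all_algebra.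
Set Implicit Arguments.
Unset Strict Implicit.
Unset Printing Implicit Defensive.
Import GRing.Theory.
Local Open Scope ring_scope.

(* Given a left unit e of r_1, ..., r_n, pick a right unit f of r_1, ..., r_n
   and e; the combination e + f - f e is then an idempotent
   two-sided unit of the whole family. *)

Section TwoSidedUnit.

Variables (R : zmodType) (mul : R -> R -> R).
Hypothesis mulA : forall x y z, mul x (mul y z) = mul (mul x y) z.
Hypothesis mulDl : forall x y z, mul (x + y) z = mul x z + mul y z.
Hypothesis mulDr : forall x y z, mul x (y + z) = mul x y + mul x z.

Lemma mulBl x y z : mul (y - z) x = mul y x - mul z x.
Proof. by apply/eqP; rewrite eq_sym subr_eq -mulDl subrK. Qed.

Lemma mulBr x y z : mul x (y - z) = mul x y - mul x z.
Proof. by apply/eqP; rewrite eq_sym subr_eq -mulDr subrK. Qed.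

Definition unit_join (e f : R) : R := e + f - mul f e.

Lemma unit_joinl e f x : mul e x = x -> mul (unit_join e f) x = x.
Proof. by move=> ex; rewrite mulBl !mulDl ex -mulA ex addrK. Qed.

Lemma unit_joinr e f x : mul x f = x -> mul x (unit_join e f) = x.
Proof.
by move=> xf; rewrite mulBr mulDr xf mulA xf addrAC subrr add0r.
Qed.

Lemma idempotent_unit_join e f :
  idempotent_el mul e -> idempotent_el mul f -> mul e f = e ->
  idempotent_el mul (unit_join e f).
Proof.
move=> ee ff ef; have eg : mul e (unit_join e f) = e.
  by rewrite mulBr mulDr ee ef mulA ef ee addrK.
have fg : mul f (unit_join e f) = f by apply: unit_joinr.
by rewrite /idempotent_el mulBl !mulDl eg fg -mulA eg.
Qed.

Lemma right_locally_unital_cons n (r : 'I_n -> R) x :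
  right_locally_unital mul ->
  exists f, [/\ idempotent_el mul f, mul x f = x
              & forall i, mul (r i) f = r i].
Proof.
move=> rlu; pose r' (i : 'I_n.+1) := oapp r x (unlift ord_max i).
have [f [ff rf]] := rlu n.+1 r'; exists f; split=> //.
  by have := rf ord_max; rewrite /r' unlift_none.
by move=> i; have := rf (lift ord_max i); rewrite /r' liftK.
Qed.

End TwoSidedUnit.

Theorem mainTheorem7 (R : zmodType) (mul : R -> R -> R)
  (hR : assoc_ring_axioms mul) :
  (left_locally_unital mul /\ right_locally_unital mul) <->
  (forall (n : nat) (r : 'I_n -> R),
     exists e : R, idempotent_el mul e /\
       (forall i, mul e (r i) = r i /\ mul (r i) e = r i)).
Proof.
case: hR => mulA mulDl mulDr; split; last first.
  by move=> lru; split=> n r; have [e [ee er]] := lru n r;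
     exists e; split=> // i; case: (er i).
case=> llu rlu n r; have [e [ee er]] := llu n r.
have [f [ff ef rf]] := right_locally_unital_cons r e rlu.
exists (unit_join mul e f); split; first exact: idempotent_unit_join.
by move=> i; split; [apply: unit_joinl | apply: unit_joinr].
Qed.
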